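(* Let $N_{D\Lambda}$ be the smallest positive integer $N$ such that $N(x,x)\in2\mathbb Z$ for all $x\in\Lambda^\vee$, and $N'_{D\Lambda}$ the smallest positive integer $N$ with $Nx\in\Lambda$ for all $x\in\Lambda^\vee$ (the exponent of $G_\Lambda$). Then $N_{D\Lambda}=D_zf_\rho$, and $N'_{D\Lambda}=N_{D\Lambda}$ if $b_z$ is odd, while $N'_{D\Lambda}=N_{D\Lambda}/2$ if $b_z$ is even.
   Context: Let $z\in\mathcal H$ with $a_zz^2+b_zz+c_z=0$ for coprime integers $a_z>0,b_z,c_z$, $D_z=4a_zc_z-b_z^2>0$, and $f_\rho$ a positive integer. $\Lambda$ is the lattice with basis $e_2,e_1$ and Gram matrix $f_\rho\begin{pmatrix}2a_z&b_z\\ b_z&2c_z\end{pmatrix}$, with the bilinear form extended $\mathbb Q$-linearly; $\Lambda^\vee\subset\Lambda\otimes\mathbb Q$ is its dual lattice and $G_\Lambda=\Lambda^\vee/\Lambda$. *)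

From mathcomp Require Import all_boot all_order all_algebra.
Set Implicit Arguments. Unset Strict Implicit. Unset Printing Implicit Defensive.
Import Order.TTheory GRing.Theory Num.Theory.
Local Open Scope ring_scope.

(* Λ ⊗ Q is identified with rat * rat via coordinates w.r.t. the basis (e2, e1).
   The bilinear form has Gram matrix f * [[2a, b], [b, 2c]] in this basis. *)
Definition bform (a b c : int) (f : nat) (x y : rat * rat) : rat :=
  f%:R * (2 * a%:~R * x.1 * y.1 + b%:~R * (x.1 * y.2 + x.2 * y.1)
          + 2 * c%:~R * x.2 * y.2).

Definition in_lattice (x : rat * rat) : Prop :=
  x.1 \is a Num.int /\ x.2 \is a Num.int.

Definition in_dual (a b c : int) (f : nat) (x : rat * rat) : Prop :=
  forall y, in_lattice y -> bform a b c f x y \is a Num.int.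

Definition level_prop (a b c : int) (f : nat) (N : int) : Prop :=
  0 < N /\ forall x, in_dual a b c f x ->
    (N%:~R * bform a b c f x x) / 2 \is a Num.int.

Definition exponent_prop (a b c : int) (f : nat) (N : int) : Prop :=
  0 < N /\ forall x, in_dual a b c f x ->
    in_lattice (N%:~R * x.1, N%:~R * x.2).

Definition is_least (P : int -> Prop) (n : int) : Prop :=
  P n /\ forall m, P m -> n <= m.

From mathcomp Require Import all_boot all_order all_algebra.
From mathcomp Require Import ring.
Import Order.TTheory GRing.Theory Num.Theory.
Local Open Scope ring_scope.

(* Write M = D f and, for x in Λ ⊗ Q, u = (x, e2), v = (x, e1).  Then x lies in
   Λ^∨ exactly when u and v are integers, and in that case
   M x = (2c u - b v, 2a v - b u) and M (x, x) / 2 = c u^2 - b u v + a v^2.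
   So N (x, x) ∈ 2Z on Λ^∨ iff M divides N times every value of the primitive
   form c u^2 - b u v + a v^2, i.e. iff M | N; and N Λ^∨ ⊆ Λ iff M | N b and
   M | 2N, i.e. iff M | N for b odd and M/2 | N for b even. *)

Lemma Qint_dvdzE (m d : int) :
  d != 0 -> ((m%:~R / d%:~R : rat) \is a Num.int) = (d %| m)%Z.
Proof.
move=> d_neq0; apply/idP/idP => [/intrP[q def_q] | /Qint_dvdz //].
apply/dvdzP; exists q; apply: (@intr_inj rat).
by rewrite rmorphM /= -def_q mulfVK ?intr_eq0.
Qed.

Lemma dvdz_mul_gcdr (d m n p : int) :
  (d %| m * gcdz n p)%Z = (d %| m * n)%Z && (d %| m * p)%Z.
Proof. by rewrite -dvdz_gcd -mulz_gcdr !dvdzE !abszM absz_nat. Qed.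

Lemma dvdz_le (d m : int) : 0 < m -> (d %| m)%Z -> d <= m.
Proof.
move=> m_gt0 /dvdzP[q def_m]; have [d_le0 | d_gt0] := lerP d 0.
  exact: le_trans d_le0 (ltW m_gt0).
have q_gt0 : 0 < q by rewrite -(pmulr_lgt0 _ d_gt0) -def_m.
by rewrite def_m ler_peMl // ?ltW // -gtz0_ge1.
Qed.

Lemma dvdz_mul_gcd3 (d N a b c : int) :
  (d %| N * gcdz (gcdz a b) c)%Z = [&& (d %| N * a)%Z, (d %| N * b)%Z & (d %| N * c)%Z].
Proof. by rewrite !dvdz_mul_gcdr andbA. Qed.

Lemma is_least_dvdz (P : int -> Prop) (d : int) :
  0 < d -> (forall N, P N <-> 0 < N /\ (d %| N)%Z) -> is_least P d.
Proof.
move=> d_gt0 defP; split; first by apply/defP; rewrite dvdzz.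
by move=> N /defP[N_gt0 dvd_dN]; apply: dvdz_le.
Qed.

Lemma dvdz_mul_primitive_form (d N a b c : int) : gcdz (gcdz a b) c = 1 ->
  (forall u v, (d %| N * (c * u ^+ 2 - b * u * v + a * v ^+ 2))%Z) <-> (d %| N)%Z.
Proof.
move=> abc_coprime; split=> [dvd_dNQ | dvd_dN u v]; last exact: dvdz_mulr.
have dvd_dNc : (d %| N * c)%Z.
  by move: (dvd_dNQ 1 0); rewrite expr1n expr0n !(mulr1, mulr0, subr0, addr0).
have dvd_dNa : (d %| N * a)%Z.
  by move: (dvd_dNQ 0 1); rewrite expr1n expr0n !(mulr1, mulr0, mul0r, sub0r, add0r).
have dvd_dNb : (d %| N * b)%Z.
  have -> : N * b = N * a + N * c - N * (c * 1 ^+ 2 - b * 1 * 1 + a * 1 ^+ 2) by ring.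
  by rewrite rpredB ?rpredD ?dvd_dNQ.
by rewrite -[N]mulr1 -abc_coprime dvdz_mul_gcd3 dvd_dNa dvd_dNb dvd_dNc.
Qed.

Lemma dvdz_mul_adj_gram (d N a b c : int) : gcdz (gcdz a b) c = 1 ->
  (forall u v, (d %| N * (2 * c * u - b * v))%Z /\ (d %| N * (2 * a * v - b * u))%Z)
  <-> (d %| N * b)%Z /\ (d %| N * 2)%Z.
Proof.
move=> abc_coprime; split=> [dvd_dNadj | [dvd_dNb dvd_dN2] u v].
  have [dvd_dN2c _] := dvd_dNadj 1 0; have [dvd_dNb dvd_dN2a] := dvd_dNadj 0 1.
  rewrite mulr0 subr0 mulr1 in dvd_dN2c.
  rewrite mulr0 sub0r mulr1 mulrN rpredN in dvd_dNb.
  rewrite mulr0 subr0 mulr1 in dvd_dN2a.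
  split=> //; rewrite -[N * 2]mulr1 -[X in _ * X]abc_coprime dvdz_mul_gcd3 -!mulrA.
  by rewrite dvd_dN2a dvd_dN2c (mulrC 2 b) mulrA dvdz_mulr.
have -> : N * (2 * c * u - b * v) = N * 2 * (c * u) - N * b * v by ring.
have -> : N * (2 * a * v - b * u) = N * 2 * (a * v) - N * b * u by ring.
by split; apply: rpredB; apply: dvdz_mulr.
Qed.

Lemma coprimez2 (b : int) : coprimez b 2 = ~~ (2 %| b)%Z.
Proof.
have abs2 : `|2|%N = 2%N by [].
by rewrite /coprimez /gcdz dvdzE !abs2 eqz_nat -/(coprime _ 2) coprimen2 dvdn2 negbK.
Qed.

Lemma dvdz_mul_odd (d N b : int) : ~~ (2 %| b)%Z ->
  (d %| N * b)%Z /\ (d %| N * 2)%Z <-> (d %| N)%Z.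
Proof.
rewrite -coprimez2 => /eqP b2_coprime.
have -> : (d %| N)%Z = (d %| N * gcdz b 2)%Z by rewrite b2_coprime mulr1.
by rewrite dvdz_mul_gcdr; split=> [[-> ->] | /andP].
Qed.

Lemma dvdz_mul_even (d N b : int) : (2 %| b)%Z -> (2 %| d)%Z ->
  (d %| N * b)%Z /\ (d %| N * 2)%Z <-> ((d %/ 2)%Z %| N)%Z.
Proof.
move=> /dvdzP[k ->] /divzK; set e := (d %/ 2)%Z => <-.
rewrite mulrA !dvdz_mul2r //.
by split=> [[] // | dvd_eN]; rewrite dvdz_mulr.
Qed.

Section DualLattice.

Variables (a b c : int) (f : nat).

Local Notation B := (bform a b c f).
Local Notation M := ((4 * a * c - b ^+ 2) * f%:Z).

Hypothesis M_neq0 : M != 0.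

Lemma intr_disc : (M%:~R : rat) = (4 * a%:~R * c%:~R - b%:~R ^+ 2) * f%:R.
Proof. by rewrite !(rmorphM, rmorphB, rmorphXn). Qed.

Lemma bform_basisE x y : B x y = y.1 * B x (1, 0) + y.2 * B x (0, 1).
Proof. by rewrite /bform /=; ring. Qed.

Lemma mul_disc_coords x :
  M%:~R * x.1 = 2 * c%:~R * B x (1, 0) - b%:~R * B x (0, 1) /\
  M%:~R * x.2 = 2 * a%:~R * B x (0, 1) - b%:~R * B x (1, 0).
Proof. by rewrite intr_disc /bform /=; split; ring. Qed.

(* The Gram matrix of Λ has inverse [[2c, -b], [-b, 2a]] / M, so this is the
   vector x with (x, e2) = u and (x, e1) = v. *)
Definition dual_vec (u v : int) : rat * rat :=
  ((2 * c * u - b * v)%:~R / M%:~R, (2 * a * v - b * u)%:~R / M%:~R).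

Lemma bform_dual_vec u v :
  B (dual_vec u v) (1, 0) = u%:~R /\ B (dual_vec u v) (0, 1) = v%:~R.
Proof.
have Mr_neq0 : (M%:~R : rat) != 0 by rewrite intr_eq0.
move: (Mr_neq0); rewrite intr_disc mulf_eq0 negb_or => /andP[D_neq0 f_neq0].
by rewrite /dual_vec /bform /= intr_disc !(rmorphM, rmorphB); split; field; apply/andP.
Qed.

Lemma in_dualP x : in_dual a b c f x <-> exists u v, x = dual_vec u v.
Proof.
split=> [x_dual | [u [v ->]] y [y1_int y2_int]]; last first.
  have [e2E e1E] := bform_dual_vec u v.
  by rewrite bform_basisE e2E e1E rpredD ?rpredM ?intr_int.
have lattice_e2 : in_lattice (1, 0) by split; rewrite /= ?rpred0 ?rpred1.
have lattice_e1 : in_lattice (0, 1) by split; rewrite /= ?rpred0 ?rpred1.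
have /intrP[u def_u] := x_dual _ lattice_e2.
have /intrP[v def_v] := x_dual _ lattice_e1.
exists u, v; have [x1E x2E] := mul_disc_coords x.
have Mr_neq0 : (M%:~R : rat) != 0 by rewrite intr_eq0.
rewrite /dual_vec; move: (M%:~R) Mr_neq0 x1E x2E => m m_neq0 x1E x2E.
apply: injective_projections => /=; rewrite !(rmorphB, rmorphM, rmorph_nat) /=.
  by rewrite -def_u -def_v -x1E mulrC mulKf.
by rewrite -def_u -def_v -x2E mulrC mulKf.
Qed.

Lemma dual_vec_norm u v : B (dual_vec u v) (dual_vec u v) / 2 =
  (c * u ^+ 2 - b * u * v + a * v ^+ 2)%:~R / M%:~R.
Proof.
have [e2E e1E] := bform_dual_vec u v.
have Mr_neq0 : (M%:~R : rat) != 0 by rewrite intr_eq0.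
rewrite bform_basisE e2E e1E /dual_vec /=.
move: (M%:~R) Mr_neq0 => m m_neq0.
by rewrite !(rmorphD, rmorphB, rmorphM, rmorphXn) /=; field.
Qed.

Lemma level_propE N : level_prop a b c f N <->
  0 < N /\ forall u v, (M %| N * (c * u ^+ 2 - b * u * v + a * v ^+ 2))%Z.
Proof.
have scaled_norm u v : N%:~R * B (dual_vec u v) (dual_vec u v) / 2 =
    (N * (c * u ^+ 2 - b * u * v + a * v ^+ 2))%:~R / M%:~R.
  by rewrite -mulrA dual_vec_norm mulrA -intrM.
split=> -[N_gt0 N_level]; split=> //; [move=> u v | move=> x /in_dualP[u [v ->]]].
  by rewrite -Qint_dvdzE // -scaled_norm; apply/N_level/in_dualP; exists u, v.
by rewrite scaled_norm Qint_dvdzE.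
Qed.

Lemma exponent_propE N : exponent_prop a b c f N <-> 0 < N /\
  forall u v, (M %| N * (2 * c * u - b * v))%Z /\ (M %| N * (2 * a * v - b * u))%Z.
Proof.
have scaled_coord (k : int) : N%:~R * (k%:~R / M%:~R) = (N * k)%:~R / M%:~R :> rat.
  by rewrite mulrA -intrM.
split=> -[N_gt0 N_exp]; split=> //; [move=> u v | move=> x /in_dualP[u [v ->]]].
  have /N_exp[] : in_dual a b c f (dual_vec u v) by apply/in_dualP; exists u, v.
  by rewrite /= !scaled_coord !Qint_dvdzE.
by have [] := N_exp u v; split; rewrite /= scaled_coord Qint_dvdzE.
Qed.

End DualLattice.

Theorem lemma2p4p3 (a b c : int) (f : nat) :
  0 < a ->
  gcdz (gcdz a b) c = 1 ->
  0 < 4 * a * c - b ^+ 2 ->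
  (0 < f)%N ->
  let D := 4 * a * c - b ^+ 2 in
  is_least (level_prop a b c f) (D * f%:Z) /\
  (~~ (2 %| b)%Z -> is_least (exponent_prop a b c f) (D * f%:Z)) /\
  ((2 %| b)%Z -> is_least (exponent_prop a b c f) ((D * f%:Z) %/ 2)%Z).
Proof.
move=> _ abc_coprime D_gt0 f_gt0 D; rewrite {}/D.
have M_gt0 : 0 < (4 * a * c - b ^+ 2) * f%:Z by rewrite mulr_gt0 // ltz_nat.
have M_neq0 := lt0r_neq0 M_gt0.
split; [|split=> b_parity].
- apply: is_least_dvdz => // N.
  by rewrite level_propE // dvdz_mul_primitive_form.
- apply: is_least_dvdz => // N.
  by rewrite exponent_propE // dvdz_mul_adj_gram // dvdz_mul_odd.
have M_even : (2 %| (4 * a * c - b ^+ 2) * f%:Z)%Z.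
  by rewrite dvdz_mulr // rpredB ?expr2 ?dvdz_mulr.
have half_M_gt0 : 0 < ((4 * a * c - b ^+ 2) * f%:Z %/ 2)%Z.
  by rewrite -(pmulr_lgt0 _ (isT : (0 : int) < 2)) divzK.
apply: is_least_dvdz => // N.
by rewrite exponent_propE // dvdz_mul_adj_gram // dvdz_mul_even.
Qed.
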